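(* Let $k$ be an algebraically closed field of characteristic $p>0$ and $P$ a finite $p$-group. Then every indecomposable finitely generated $kP$-module $M$ with $\mathrm{End}_{kP}(M)$ symmetric satisfies $\dim_k M\le|P|$, and if $P$ is non-cyclic there are infinitely many pairwise non-isomorphic such modules.
   Context: Symmetric: the algebra is isomorphic to its $k$-dual as a bimodule. *)

From HB Require Import structures.
From mathcomp Require Import all_boot all_order all_algebra all_fingroup all_solvable all_field all_character.
From mathcomp Require Import mxrepresentation.
Set Implicit Arguments. Unset Strict Implicit. Unset Printing Implicit Defensive.
Import GRing.Theory.
Local Open Scope ring_scope.

Section Defs.
Variables (F : fieldType) (gT : finGroupType) (G : {group gT}).

(* A finitely generated kG-module of k-dimension n, given by a matrix
   representation rG; submodules are row spaces U with mxmodule rG U. *)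

Definition mx_indecomposable n (rG : mx_representation F G n) : Prop :=
  (0 < n)%N /\
  forall U V : 'M[F]_n, mxmodule rG U -> mxmodule rG V ->
    (U + V :=: 1%:M)%MS -> (U :&: V)%MS = 0 :> 'M[F]_n ->
    U = 0 \/ V = 0.

Definition in_End n (rG : mx_representation F G n) (f : 'M[F]_n) : Prop :=
  centgmx rG f.

Definition End_linear_form n (rG : mx_representation F G n) (l : 'M[F]_n -> F) :=
  forall (a : F) (u v : 'M[F]_n), in_End rG u -> in_End rG v ->
    l (a *: u + v) = a * l u + l v.

(* End_{kG}(M) is symmetric: there is an isomorphism of E-E-bimodules
   phi : E -> Hom_k(E, k), where the dual carries the bimodule structure
   (a . f . b)(y) = f (b y a).  phi x is written (phi x : 'M_n -> F),
   only its values on E matter. *)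
Definition End_symmetric n (rG : mx_representation F G n) : Prop :=
  exists phi : 'M[F]_n -> 'M[F]_n -> F,
    (forall x, in_End rG x -> End_linear_form rG (phi x)) /\
    (forall (c : F) x x' y, in_End rG x -> in_End rG x' -> in_End rG y ->
        phi (c *: x + x') y = c * phi x y + phi x' y) /\
    (forall a x b y, in_End rG a -> in_End rG x -> in_End rG b -> in_End rG y ->
        phi (a *m x *m b) y = phi x (b *m y *m a)) /\
    (forall x, in_End rG x -> (forall y, in_End rG y -> phi x y = 0) -> x = 0) /\
    (forall l, End_linear_form rG l ->
        exists2 x, in_End rG x & forall y, in_End rG y -> phi x y = l y).

End Defs.

(* Let E = End_{kP}(M) with M indecomposable. By Fitting's lemma every non-unit of E
   is nilpotent; a descent on the rank of w E then yields a nonzero P-fixed vector w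
   of M killed by all non-units, hence an eigenvector of every y in E (k is closed).
   For P-fixed vectors v of the dual M*, the rank-one maps v^T w lie in E, and a
   symmetric structure on E gives a nondegenerate form t, so v |-> t (v^T w) is an
   injective linear form on the fixed points of M*. Hence M* has a one-dimensional
   socle, so it embeds in kP and dim M <= |P|.
   If P is not cyclic, P/Phi(P) maps onto (Z/p)^2, giving additive characters
   chi1, chi2 : P -> k; for each l in k the module g |-> [[1,0],[chi1 g + l chi2 g,1]]
   is indecomposable with End = k[J]/(J^2), which is symmetric, and different l give
   non-isomorphic modules, of which there are infinitely many as k is infinite. *)

From HB Require Import structures.
From mathcomp Require Import all_boot all_order all_algebra all_fingroup all_solvable all_field all_character.
From mathcomp Require Import mxrepresentation mxabelem.
From Stdlib Require Import Classical_Prop.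
Set Implicit Arguments. Unset Strict Implicit. Unset Printing Implicit Defensive.
Import GRing.Theory.
Local Open Scope ring_scope.

Section EndAlgebra.
Variables (k : fieldType) (gT : finGroupType) (G : {group gT}) (n : nat).
Variable rG : mx_representation k G n.
Implicit Types (x y : 'M[k]_n) (l : 'M[k]_n -> k).

Lemma centgmx0 : centgmx rG 0.
Proof. by apply/centgmxP => g _; rewrite mul0mx mulmx0. Qed.

Lemma centgmx1 : centgmx rG 1%:M.
Proof. by apply/centgmxP => g _; rewrite mul1mx mulmx1. Qed.

Lemma centgmxZ c x : centgmx rG x -> centgmx rG (c *: x).
Proof. by move=> /centgmxP cx; apply/centgmxP => g Gg; rewrite -scalemxAl cx // scalemxAr. Qed.

Lemma centgmxM x y : centgmx rG x -> centgmx rG y -> centgmx rG (x *m y).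
Proof.
by move=> /centgmxP cx /centgmxP cy; apply/centgmxP => g Gg; rewrite -mulmxA cy // !mulmxA cx.
Qed.

Lemma centgmx_subscalar y a : centgmx rG y -> centgmx rG (y - a%:M).
Proof.
by move=> /centgmxP cy; apply/centgmxP => g Gg; rewrite mulmxBl mulmxBr cy // scalar_mxC.
Qed.

Lemma rfix_mul_cent (w : 'rV[k]_n) y :
  (w <= rfix_mx rG G)%MS -> centgmx rG y -> (w *m y <= rfix_mx rG G)%MS.
Proof.
move=> /rfix_mxP wF /centgmxP cy; apply/rfix_mxP => g Gg.
by rewrite -mulmxA cy // mulmxA wF.
Qed.

Lemma End_linear_form0 l : End_linear_form rG l -> l 0 = 0.
Proof.
move=> linl; have := linl 1 0 0 centgmx0 centgmx0.
by rewrite scaler0 addr0 mul1r => /(congr1 (fun t => t - l 0)); rewrite subrr addrK.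
Qed.

Lemma End_linear_formZ l c x : End_linear_form rG l -> centgmx rG x -> l (c *: x) = c * l x.
Proof.
move=> linl cx; rewrite -[c *: x]addr0 linl //; last exact: centgmx0.
by rewrite -[RHS]addr0; congr (_ + _); apply: End_linear_form0.
Qed.

Lemma End_symmetric_form : End_symmetric rG ->
  exists t, End_linear_form rG t /\
    forall x, centgmx rG x -> (forall y, centgmx rG y -> t (x *m y) = 0) -> x = 0.
Proof.
case=> phi [linphi [_ [bimod [inj _]]]].
have phiE x y : centgmx rG x -> centgmx rG y -> phi x y = phi 1%:M (x *m y).
  by move=> cx cy; have := bimod _ _ _ _ (centgmx1) (centgmx1) cx cy; rewrite !mul1mx mulmx1.
exists (phi 1%:M); split=> [|x cx t0]; first exact: linphi centgmx1.
by apply: inj => // y cy; rewrite phiE // t0.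
Qed.

End EndAlgebra.

Lemma sub_rV_rank_le1 (k : fieldType) m n (Z : 'M[k]_(m, n)) (v w : 'rV[k]_n) :
  (\rank Z <= 1)%N -> w != 0 -> (w <= Z)%MS -> (v <= Z)%MS -> (v <= w)%MS.
Proof.
move=> rkZ nzw wZ vZ; apply: submx_trans vZ _.
rewrite -(geq_leqif (mxrank_leqif_sup wZ)).
by apply: leq_trans rkZ _; rewrite rank_rV lt0n nzw.
Qed.

Lemma mul_col_row_eq0 (k : fieldType) m n (c : 'cV[k]_m) (w : 'rV[k]_n) :
  w != 0 -> c *m w = 0 -> c = 0.
Proof.
move=> nzw cw0; set a := (w *m pinvmx w) 0 0.
have nz_a : a != 0.
  apply: contraNneq nzw => a0.
  by rewrite -(mulmxKpV (submx_refl w)) [w *m _]mx11_scalar -/a a0 mul_scalar_mx scale0r.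
have : c *m (w *m pinvmx w) = 0 by rewrite mulmxA cw0 mul0mx.
by rewrite [w *m _]mx11_scalar mul_mx_scalar => /eqP; rewrite scalemx_eq0 (negbTE nz_a) => /eqP.
Qed.

Lemma rank_le1_of_injective_form (k : fieldType) m n (Z : 'M[k]_(m, n)) (f : 'rV[k]_n -> k) :
  (forall a u v, (u <= Z)%MS -> (v <= Z)%MS -> f (a *: u + v) = a * f u + f v) ->
  (forall v, (v <= Z)%MS -> f v = 0 -> v = 0) -> (\rank Z <= 1)%N.
Proof.
move=> linf injf; rewrite leqNgt; apply/negP => rk2.
pose B := row_base Z; pose e (i : 'I_(\rank Z)) : 'rV[k]_(\rank Z) := delta_mx 0 i.
have BZ c : (c *m B <= Z)%MS by rewrite (submx_trans (submxMl c B)) ?eq_row_base.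
have f0 : f 0 = 0.
  have := linf 1 0 0 (sub0mx _ _) (sub0mx _ _).
  by rewrite scaler0 addr0 mul1r => /(congr1 (fun t => t - f 0)); rewrite subrr addrK.
have fZ a u : (u <= Z)%MS -> f (a *: u) = a * f u.
  by move=> uZ; rewrite -[a *: u]addr0 linf ?sub0mx // f0 addr0.
set i0 : 'I_(\rank Z) := Ordinal (ltnW rk2); set i1 : 'I_(\rank Z) := Ordinal rk2.
pose c := f (e i0 *m B) *: e i1 - f (e i1 *m B) *: e i0.
have : c *m B = 0.
  apply: injf; first exact: BZ.
  rewrite mulmxBl -!scalemxAl -scaleNr linf ?scalemx_sub ?BZ // fZ ?BZ //.
  by rewrite mulNr mulrC addrN.
rewrite -(mul0mx _ B) => /(row_free_inj (row_base_free Z)) /matrixP/(_ 0 i1).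
rewrite !mxE eqxx /= mulr1 mulr0 subr0 => /(injf _ (BZ _ _)) /eqP.
rewrite -(mul0mx _ B) => /eqP/(row_free_inj (row_base_free Z))/matrixP/(_ 0 i0).
by rewrite !mxE !eqxx => /eqP; rewrite oner_eq0.
Qed.

Section PgroupFixedPoints.
Variables (k : fieldType) (p : nat) (gT : finGroupType) (P : {group gT}).
Hypotheses (charpk : p \in [pchar k]) (pP : (p.-group P)%g).
Variables (n : nat) (rP : mx_representation k P n).

Lemma rfix_capmx_neq0 (U : 'M[k]_n) :
  mxmodule rP U -> U != 0 -> (U :&: rfix_mx rP P)%MS != 0.
Proof.
move=> modU nzU.
have := rfix_pgroup_pchar charpk (submod_repr modU) _ pP (subxx P).
rewrite lt0n mxrank_eq0 => /(_ nzU).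
rewrite -mxrank_eq0 (rfix_submod modU (subxx P)) mxrank_eq0.
by apply: contraNneq => ->; rewrite linear0.
Qed.

Lemma rank_rfix_le1_indecomposable :
  (0 < n)%N -> (\rank (rfix_mx rP P) <= 1)%N -> mx_indecomposable rP.
Proof.
move=> n_gt0 rk1; split=> // U V modU modV _ capUV.
have [-> | nzU] := eqVneq U 0; [by left | right].
apply: contraTeq isT => nzV.
have [u /[!sub_capmx] /andP[uU uF] nzu] := rowV0Pn (rfix_capmx_neq0 modU nzU).
have [v /[!sub_capmx] /andP[vV vF] nzv] := rowV0Pn (rfix_capmx_neq0 modV nzV).
have uV : (u <= V)%MS := submx_trans (sub_rV_rank_le1 rk1 nzv vF uF) vV.
by move: nzu; rewrite -submx0 -capUV sub_capmx uU uV.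
Qed.

(* Right multiplication by [orbit_mx u] is the kP-module map M -> kP,
   v |-> sum_g (v rP g u) g. *)
Definition orbit_mx (u : 'cV[k]_n) : 'M[k]_(n, #|P|) :=
  \matrix_(i, l) (rP (enum_val l) *m u) i 0.

Lemma orbit_mx_eq0 m (W : 'M[k]_(m, n)) u :
  W *m orbit_mx u = 0 <-> {in P, forall g, W *m rP g *m u = 0}.
Proof.
have WuE l : col l (W *m orbit_mx u) = W *m rP (enum_val l) *m u.
  apply/matrixP => i j; rewrite ord1 -mulmxA !mxE.
  by apply: eq_bigr => t _; rewrite mxE.
split=> [Wu0 g Pg | Wu0].
  by rewrite -(enum_rankK_in Pg Pg) -WuE Wu0; apply/matrixP => ? ?; rewrite !mxE.
apply/matrixP => i l; have /matrixP/(_ i 0) := WuE l.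
by rewrite Wu0 ?enum_valP // !mxE.
Qed.

Lemma orbit_mx_ker_module u : mxmodule rP (kermx (orbit_mx u)).
Proof.
apply/mxmoduleP => x Px; apply/sub_kermxP/(orbit_mx_eq0 _ u).2 => g Pg.
rewrite -(mulmxA _ (rP x)) -repr_mxM //.
by apply: (orbit_mx_eq0 _ u).1; [exact: mulmx_ker | rewrite groupM].
Qed.

Lemma rank_rfix_le1_dim_le_card : (\rank (rfix_mx rP P) <= 1)%N -> (n <= #|P|)%N.
Proof.
move=> rk1; have [-> // | n_gt0] := posnP n.
have [w wF nzw] := rowV0Pn (rfix_pgroup_pchar charpk rP n_gt0 pP (subxx P)).
suff /eqP : kermx (orbit_mx (pinvmx w)) = 0.
  by rewrite kermx_eq0 => /eqnP <-; exact: rank_leq_col.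
apply: contraTeq isT => nzK.
have [v /[!sub_capmx] /andP[vK vF] nzv] :=
  rowV0Pn (rfix_capmx_neq0 (orbit_mx_ker_module _) nzK).
have vw := sub_rV_rank_le1 rk1 nzw wF vF.
have := (orbit_mx_eq0 v _).1 (sub_kermxP vK) 1%g (group1 P).
rewrite repr_mx1 mulmx1 => vu0.
by move: nzv; rewrite -(mulmxKpV vw) vu0 mul0mx eqxx.
Qed.

End PgroupFixedPoints.

Section Fitting.
Variables (k : fieldType) (gT : finGroupType) (G : {group gT}) (n' : nat).
Local Notation n := n'.+1.
Variable rG : mx_representation k G n.
Hypothesis indecG : mx_indecomposable rG.

Lemma cent_nonunit_nilpotent y :
  centgmx rG y -> y \notin unitmx -> exists m, y ^+ m = 0.
Proof.
move=> cy nuy.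
have [m [q /implyP nq0 defc]] := multiplicity_XsubC (char_poly y) 0.
have {}nq0 : ~~ root q 0 by apply: nq0; exact: monic_neq0 (char_poly_monic y).
rewrite subr0 in defc.
have hornerXn : horner_mx y ('X ^+ m) = y ^+ m by rewrite rmorphXn /= horner_mx_X.
have m_gt0 : (0 < m)%N.
  have : eigenvalue y 0 by rewrite /eigenvalue /eigenspace raddf0 subr0 kermx_eq0 row_free_unit.
  case: m defc {hornerXn} => // defc.
  by rewrite eigenvalue_root_char defc expr0 mulr1 (negbTE nq0).
have kerM r : mxmodule rG (kermxpoly y r).
  apply/mxmoduleP => x Gx; apply: comm_mx_stable_kermxpoly.
  by rewrite /comm_mx (centgmxP cy).
have cop : coprimep q ('X ^+ m) by rewrite coprimep_expr ?coprimepX.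
have sum1 : (kermxpoly y q + kermxpoly y ('X ^+ m) :=: 1%:M)%MS.
  apply: eqmx_trans (eqmx_sym (kermxpolyM y cop)) _.
  by rewrite -defc; apply: kermxpoly_min; exact: mxminpoly_dvd_char.
have [ker_q0 | ker_Xm0] := indecG.2 _ _ (kerM q) (kerM _) sum1 (mxdirect_kermxpoly y cop).
  exists m; rewrite -hornerXn; apply/eqP.
  have /sub_kermxP : (1%:M <= kermxpoly y ('X ^+ m))%MS by rewrite -sum1 ker_q0 adds0mx.
  by rewrite mul1mx => ->.
move: ker_Xm0 nuy; rewrite /kermxpoly hornerXn => /eqP; rewrite kermx_eq0 row_free_unit.
by rewrite -[_ \in unitmx]/(_ \is a GRing.unit) unitrX_pos // => ->.
Qed.

(* Its row space is w E, E = End(M) being encoded by mxvec as the centraliser of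
   the enveloping algebra. *)
Definition End_span (w : 'rV[k]_n) : 'M[k]_(n * n, n) :=
  'C(enveloping_algebra_mx rG)%MS *m lin_mul_row w.

Lemma sub_End_spanP (w v : 'rV[k]_n) :
  (v <= End_span w)%MS <-> exists2 y, centgmx rG y & v = w *m y.
Proof.
split=> [/submxP[D ->] | [y cy ->]].
  exists (vec_mx (D *m 'C(enveloping_algebra_mx rG)%MS)).
    by rewrite -memmx_cent_envelop vec_mxK submxMl.
  by rewrite mulmxA -[RHS]mul_vec_lin_row vec_mxK.
by rewrite -mul_vec_lin_row submxMr // memmx_cent_envelop.
Qed.

Lemma End_span_mulS (w : 'rV[k]_n) y :
  centgmx rG y -> (End_span (w *m y) <= End_span w)%MS.
Proof.
move=> cy; apply/row_subP => i; apply/sub_End_spanP.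
have /sub_End_spanP[x cx ->] := row_sub i (End_span (w *m y)).
by exists (y *m x); [exact: centgmxM | rewrite mulmxA].
Qed.

Lemma rank_End_span_mul_lt (w : 'rV[k]_n) y : w != 0 -> centgmx rG y -> y \notin unitmx ->
  (\rank (End_span (w *m y)) < \rank (End_span w))%N.
Proof.
move=> nzw cy nuy; rewrite ltnNge; apply: contra nzw => rk.
have w_span : (w <= End_span w)%MS by apply/sub_End_spanP; exists 1%:M; rewrite ?mulmx1 ?centgmx1.
have /sub_End_spanP[x cx defw] : (w <= End_span (w *m y))%MS.
  by apply: submx_trans w_span _; rewrite -(geq_leqif (mxrank_leqif_sup (End_span_mulS w cy))).
have nu_yx : y *m x \notin unitmx by rewrite unitmx_mul negb_and nuy.
have [m yxm0] := cent_nonunit_nilpotent (centgmxM cy cx) nu_yx.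
have : w = w *m (y *m x) ^+ m.
  elim: m {yxm0} => [|m IHm]; first by rewrite expr0 mulmx1.
  by rewrite exprSr mulmxA -IHm mulmxA -defw.
by rewrite yxm0 mulmx0 => ->.
Qed.

End Fitting.

Section DualRepr.
Variables (k : fieldType) (gT : finGroupType) (G : {group gT}) (n : nat).
Variable rG : mx_representation k G n.

Definition dual_mx (g : gT) : 'M[k]_n := (rG g^-1%g)^T.

Lemma dual_mx_repr : mx_repr G dual_mx.
Proof.
split=> [|x y Gx Gy]; first by rewrite /dual_mx invg1 repr_mx1 trmx1.
by rewrite /dual_mx invMg repr_mxM ?groupV // trmx_mul.
Qed.

Definition dual_repr := MxRepresentation dual_mx_repr.

Lemma rfix_dual_trP (v : 'rV[k]_n) :
  (v <= rfix_mx dual_repr G)%MS -> {in G, forall g, rG g *m v^T = v^T}.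
Proof.
move=> /rfix_mxP vF g Gg; have := vF _ (groupVr Gg).
by rewrite /= /dual_mx invgK => /(congr1 trmx); rewrite trmx_mul !trmxK.
Qed.

Lemma centgmx_dual_fix_mul (v w : 'rV[k]_n) :
  (v <= rfix_mx dual_repr G)%MS -> (w <= rfix_mx rG G)%MS -> centgmx rG (v^T *m w).
Proof.
move=> /rfix_dual_trP vF /rfix_mxP wF; apply/centgmxP => g Gg.
by rewrite -mulmxA wF // mulmxA vF.
Qed.

End DualRepr.

Section IndecomposablePgroup.
Variables (k : fieldType) (p : nat) (gT : finGroupType) (P : {group gT}).
Hypotheses (charpk : p \in [pchar k]) (pP : (p.-group P)%g).
Variables (n' : nat) (rP : mx_representation k P n'.+1).
Hypothesis indecP : mx_indecomposable rP.

Lemma rfix_nonunit_annihilator :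
  exists2 w : 'rV[k]_n'.+1, w != 0 & (w <= rfix_mx rP P)%MS /\
    forall y, centgmx rP y -> y \notin unitmx -> w *m y = 0.
Proof.
have [w wF nzw] := rowV0Pn (rfix_pgroup_pchar charpk rP (ltn0Sn n') pP (subxx P)).
have [r rkw] : exists r, \rank (End_span rP w) = r by eexists.
elim/ltn_ind: r w rkw nzw wF => r IHr w rkw nzw wF.
case: (classic (exists y, [/\ centgmx rP y, y \notin unitmx & w *m y != 0])).
  case=> y [cy nuy nzwy]; apply: (IHr _ _ (w *m y) erefl nzwy).
    by rewrite -rkw rank_End_span_mul_lt.
  exact: rfix_mul_cent.
move=> noy; exists w => //; split=> // y cy nuy.
by apply/eqP/negPn/negP => nzwy; apply: noy; exists y.
Qed.

End IndecomposablePgroup.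

Section SymmetricIndecomposable.
Variables (k : closedFieldType) (p : nat) (gT : finGroupType) (P : {group gT}).
Hypotheses (charpk : p \in [pchar k]) (pP : (p.-group P)%g).
Variables (n' : nat) (rP : mx_representation k P n'.+1).
Hypothesis indecP : mx_indecomposable rP.

Lemma rfix_common_eigenvector :
  exists2 w : 'rV[k]_n'.+1, w != 0 & (w <= rfix_mx rP P)%MS /\
    forall y, centgmx rP y -> exists c, w *m y = c *: w.
Proof.
have [w nzw [wF w_ann]] := rfix_nonunit_annihilator charpk pP indecP.
exists w => //; split=> // y cy.
have /closed_rootP[a ra] : size (char_poly y) != 1%N by rewrite size_char_poly.
have nu : y - a%:M \notin unitmx.
  by move: ra; rewrite -eigenvalue_root_char /eigenvalue /eigenspace kermx_eq0 row_free_unit.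
exists a; apply/eqP; rewrite -subr_eq0 -mul_mx_scalar -mulmxBr.
by apply/eqP/w_ann => //; exact: centgmx_subscalar.
Qed.

Lemma rank_rfix_dual_le1 : End_symmetric rP -> (\rank (rfix_mx (dual_repr rP) P) <= 1)%N.
Proof.
case/End_symmetric_form => t [lint nondeg].
have [w nzw [wF eigw]] := rfix_common_eigenvector.
apply: (@rank_le1_of_injective_form _ _ _ _ (fun v => t (v^T *m w))).
  move=> a u v uZ vZ; rewrite linearD linearZ /= mulmxDl -scalemxAl.
  by apply: lint; exact: centgmx_dual_fix_mul.
move=> v vZ tv0; have cv := centgmx_dual_fix_mul vZ wF.
suff /(mul_col_row_eq0 nzw)/eqP : v^T *m w = 0 by rewrite trmx_eq0 => /eqP.
apply: nondeg => // y cy; have [c wy] := eigw y cy.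
by rewrite -mulmxA wy -scalemxAr (End_linear_formZ _ lint cv) tv0 mulr0.
Qed.

End SymmetricIndecomposable.

Lemma indecomposable_End_symmetric_dim_le_card (k : closedFieldType) (p : nat)
    (gT : finGroupType) (P : {group gT}) n (rP : mx_representation k P n) :
  p \in [pchar k] -> (p.-group P)%g ->
  mx_indecomposable rP -> End_symmetric rP -> (n <= #|P|)%N.
Proof.
case: n rP => [|n'] rP charpk pP indecP symP; first by case: indecP.
exact/(rank_rfix_le1_dim_le_card charpk pP)/(rank_rfix_dual_le1 charpk pP indecP).
Qed.

Section Jordan2.
Variable k : fieldType.

Definition J2 : 'M[k]_2 := delta_mx 1 0.

Lemma J2_mulJ2 : J2 *m J2 = 0.
Proof. by rewrite /J2 mul_delta_mx_cond mulr0n. Qed.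

Lemma commJ2 (y : 'M[k]_2) : y *m J2 = J2 *m y -> y = y 0 0 *: 1%:M + y 1 0 *: J2.
Proof.
move=> /matrixP yJ; have e1 : lift ord0 ord0 = 1 :> 'I_2 by apply: val_inj.
have := yJ 0 0; have := yJ 1 0; rewrite !mxE !big_ord_recl !big_ord0 !mxE /= e1.
rewrite !mulr0 !mul0r !mulr1 !mul1r !add0r !addr0 => y11 y01.
have ord2 (i : 'I_2) : i = 0 \/ i = 1.
  by case: i => [[|[|//]] ?]; [left | right]; apply: val_inj.
apply/matrixP => i j.
by case: (ord2 i) => ->; case: (ord2 j) => ->; rewrite !mxE /= ?mulr0 ?mulr1 ?addr0 ?add0r ?y01 ?y11.
Qed.

End Jordan2.

Section UnitriangularRepr.
Variables (k : fieldType) (gT : finGroupType) (P : {group gT}) (chi : gT -> k).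
Hypothesis chiM : {in P &, {morph chi : x y / (x * y)%g >-> x + y}}.

Definition unitri_mx g : 'M[k]_2 := 1%:M + chi g *: J2 k.

Lemma unitri_mx_repr : mx_repr P unitri_mx.
Proof.
split=> [|x y Px Py].
  have chi1 : chi 1%g = 0 by apply: (addIr (chi 1%g)); rewrite add0r -chiM ?mulg1.
  by rewrite /unitri_mx chi1 scale0r addr0.
rewrite /unitri_mx chiM // mulmxDl !mulmxDr !mul1mx mulmx1 -scalemxAl -scalemxAr J2_mulJ2.
by rewrite !scaler0 addr0 scalerDl addrAC addrA.
Qed.

Definition unitri_repr := MxRepresentation unitri_mx_repr.

Variable g1 : gT.
Hypotheses (Pg1 : g1 \in P) (chi_g1 : chi g1 = 1).

Lemma centgmx_unitriP y : centgmx unitri_repr y <-> y *m J2 k = J2 k *m y.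
Proof.
split=> [/centgmxP/(_ g1 Pg1) | yJ].
  by rewrite /= /unitri_mx chi_g1 scale1r mulmxDr mulmxDl mulmx1 mul1mx => /addrI.
apply/centgmxP => g Pg.
by rewrite /= /unitri_mx mulmxDr mulmxDl mulmx1 mul1mx -scalemxAr -scalemxAl yJ.
Qed.

Lemma rank_rfix_unitri : (\rank (rfix_mx unitri_repr P) <= 1)%N.
Proof.
have /rfix_mxP/(_ g1 Pg1) := submx_refl (rfix_mx unitri_repr P).
rewrite /= /unitri_mx chi_g1 scale1r mulmxDr mulmx1 => /(canRL (addKr _)).
by rewrite addNr => /sub_kermxP/mxrankS; rewrite mxrank_ker mxrank_delta.
Qed.

Lemma unitri_End_symmetric : End_symmetric unitri_repr.
Proof.
have cJ : centgmx unitri_repr (J2 k) by apply/centgmx_unitriP.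
have comm x y : centgmx unitri_repr x -> centgmx unitri_repr y -> x *m y = y *m x.
  move=> /centgmx_unitriP/commJ2 -> /centgmx_unitriP yJ.
  by rewrite mulmxDl mulmxDr -!scalemxAl -!scalemxAr mul1mx mulmx1 yJ.
exists (fun x y => (x *m y) 1 0); split; last split; last split; last split.
- by move=> x _ a u v _ _; rewrite mulmxDr -scalemxAr !mxE.
- by move=> c x x' y _ _ _; rewrite mulmxDl -scalemxAl !mxE.
- move=> a x b y ca cx cb cy; congr (_ 1 0).
  by rewrite -!mulmxA comm ?mulmxA // !centgmxM.
- move=> x /centgmx_unitriP/commJ2 xE x_ann.
  have := x_ann _ (centgmx1 _); have := x_ann _ cJ.
  rewrite mulmx1 xE mulmxDl -!scalemxAl mul1mx J2_mulJ2 scaler0 addr0 !mxE /= !mulr1 mulr0 add0r.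
  by move=> x00 x10; rewrite x00 x10 !scale0r addr0.
move=> l linl; exists (l (J2 k) *: 1%:M + l 1%:M *: J2 k).
  apply/centgmx_unitriP.
  by rewrite mulmxDl mulmxDr -!scalemxAl -!scalemxAr mul1mx mulmx1.
move=> y /centgmx_unitriP/commJ2 yE.
rewrite [in RHS]yE (linl _ _ _ (centgmx1 _) (centgmxZ _ cJ)) (End_linear_formZ _ linl cJ).
rewrite [in LHS]yE !mxE !big_ord_recl big_ord0 !mxE /=.
by rewrite !mulr0 !mulr1 !addr0 !add0r mulrC [l (J2 k) * _]mulrC.
Qed.

End UnitriangularRepr.

Lemma unitri_rsim_eq (k : fieldType) (gT : finGroupType) (P : {group gT}) (chi chi' : gT -> k)
    (chiM : {in P &, {morph chi : x y / (x * y)%g >-> x + y}})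
    (chiM' : {in P &, {morph chi' : x y / (x * y)%g >-> x + y}}) (g1 : gT) :
  g1 \in P -> chi g1 = 1 -> chi' g1 = 1 ->
  mx_rsim (unitri_repr chiM) (unitri_repr chiM') -> {in P, chi =1 chi'}.
Proof.
move=> Pg1 chi_g1 chi'_g1 [B _ freeB simB] g Pg.
have JB : J2 k *m B = B *m J2 k.
  move: (simB g1 Pg1); rewrite /= /unitri_mx chi_g1 chi'_g1 scale1r.
  by rewrite mulmxDl mulmxDr mul1mx mulmx1 => /addrI.
have JB_neq0 : J2 k *m B != 0.
  apply/eqP; rewrite -(mul0mx _ B) => /(row_free_inj freeB)/matrixP/(_ 1 0)/eqP.
  by rewrite !mxE /= oner_eq0.
move: (simB g Pg); rewrite /= /unitri_mx mulmxDl mulmxDr mul1mx mulmx1 => /addrI.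
rewrite -scalemxAl -scalemxAr -JB => /eqP; rewrite -subr_eq0 -scalerBl scalemx_eq0.
by rewrite (negbTE JB_neq0) orbF subr_eq0 => /eqP.
Qed.

Lemma closed_field_notin_seq (k : closedFieldType) (s : seq k) : exists x, x \notin s.
Proof.
pose q := \prod_(a <- s) ('X - a%:P).
have /closed_rootP[x qx] : size (q * 'X - 1) != 1%N.
  by rewrite size_polyDl size_mulX ?monic_neq0 ?monic_prod_XsubC ?size_polyN ?size_poly1
    /q ?size_prod_XsubC.
exists x; apply: contraL qx => xs.
have /rootP qx0 : root q x by rewrite root_prod_XsubC.
by rewrite /root !hornerE qx0 mul0r sub0r oppr_eq0 oner_eq0.
Qed.

Lemma closed_field_uniq_seq (k : closedFieldType) N : exists s : seq k, uniq s /\ size s = N.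
Proof.
elim: N => [|N [s [us ss]]]; first by exists [::].
have [x xs] := closed_field_notin_seq s.
by exists (x :: s); rewrite /= xs us ss.
Qed.

Lemma natr_Fp_add (k : fieldType) (p : nat) (a b : 'F_p) : p \in [pchar k] ->
  (nat_of_ord (a + b)%R)%:R = (a : nat)%:R + (b : nat)%:R :> k.
Proof.
move=> charpk; have p_pr := pcharf_prime charpk.
have -> : (a + b)%R = (((a : nat) + b)%N%:R : 'F_p) by rewrite natrD !natr_Zp.
by rewrite val_Fp_nat // (GRing.natr_mod_pchar charpk) natrD.
Qed.

(* The two coordinate functions of P -> P/Phi(P) ~= 'F_p^d, for d >= 2. *)
Lemma noncyclic_pgroup_additive_chars (k : fieldType) (p : nat) (gT : finGroupType)
    (P : {group gT}) :
  p \in [pchar k] -> (p.-group P)%g -> ~~ cyclic P ->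
  exists (chi1 chi2 : gT -> k) (g1 g2 : gT),
   [/\ g1 \in P, g2 \in P, {in P &, {morph chi1 : x y / (x * y)%g >-> x + y}},
       {in P &, {morph chi2 : x y / (x * y)%g >-> x + y}} &
       [/\ chi1 g1 = 1, chi1 g2 = 0, chi2 g1 = 0 & chi2 g2 = 1]].
Proof.
move=> charpk pP ncycP; have p_pr := pcharf_prime charpk.
have abelQ : (p.-abelem (P / 'Phi(P)))%g := Phi_quotient_abelem pP.
have ntQ : (P / 'Phi(P) != 1)%g.
  by apply: contra ncycP => /eqP Q1; apply: Phi_quotient_cyclic; rewrite Q1 cyclic1.
pose d := abelem_dim' (P / 'Phi(P))%g.
have d_gt0 : (0 < d)%N.
  rewrite lt0n; apply: contra ncycP => /eqP d0; apply: Phi_quotient_cyclic; apply: prime_cyclic.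
  by rewrite -(card_abelem_rV abelQ ntQ) card_mx -/d d0 card_Fp // expn1.
pose coord := abelem_rV abelQ ntQ \o coset 'Phi(P).
pose chi (i : 'I_d.+1) (g : gT) : k := (nat_of_ord (coord g 0 i))%:R.
have nPhiP : (P \subset 'N('Phi(P)))%g := normal_norm (Phi_normal P).
have chiM i : {in P &, {morph chi i : x y / (x * y)%g >-> x + y}}.
  move=> x y Px Py; rewrite /chi /coord /= morphM ?(subsetP nPhiP) //.
  by rewrite abelem_rV_M ?mem_quotient // mxE natr_Fp_add.
have coord_onto v : exists2 g, g \in P & coord g = v.
  have /morphimP[g Ng Pg defv] := mem_rVabelem abelQ ntQ v.
  by exists g => //; rewrite /coord /= -defv rVabelemK.
have chi_delta i j g : coord g = delta_mx 0 j -> chi i g = (j == i)%:R.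
  move=> gj; rewrite /chi gj mxE eqxx /= val_Fp_nat // (GRing.natr_mod_pchar charpk).
  by rewrite eq_sym.
have [g1 Pg1 g1E] := coord_onto (delta_mx 0 0).
have [g2 Pg2 g2E] := coord_onto (delta_mx 0 (Ordinal (d_gt0 : (1 < d.+1)%N))).
exists (chi 0), (chi (Ordinal (d_gt0 : (1 < d.+1)%N))), g1, g2; split => //.
by rewrite !(chi_delta _ _ _ g1E) !(chi_delta _ _ _ g2E).
Qed.

Lemma noncyclic_pgroup_many_symmetric_indecomposables (k : closedFieldType) (p : nat)
    (gT : finGroupType) (P : {group gT}) :
  p \in [pchar k] -> (p.-group P)%g -> ~~ cyclic P ->
  forall N : nat, exists (d : 'I_N -> nat) (r : forall i : 'I_N, mx_representation k P (d i)),
    (forall i, mx_indecomposable (r i) /\ End_symmetric (r i)) /\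
    (forall i j, i != j -> ~ mx_rsim (r i) (r j)).
Proof.
move=> charpk pP ncycP N.
have [chi1 [chi2 [g1 [g2 [Pg1 Pg2 chi1M chi2M [chi11 chi12 chi21 chi22]]]]]] :=
  noncyclic_pgroup_additive_chars charpk pP ncycP.
have [s [uniq_s size_s]] := closed_field_uniq_seq k N.
pose chi (i : 'I_N) g := chi1 g + s`_i * chi2 g.
have chiM i : {in P &, {morph chi i : x y / (x * y)%g >-> x + y}}.
  by move=> x y Px Py; rewrite /chi chi1M // chi2M // mulrDr addrACA.
have chi_g1 i : chi i g1 = 1 by rewrite /chi chi11 chi21 mulr0 addr0.
exists (fun _ => 2%N), (fun i => unitri_repr (chiM i)).
split=> [i | i j neq_ij sim_ij].
  split; last exact: unitri_End_symmetric Pg1 (chi_g1 i).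
  apply: (rank_rfix_le1_indecomposable charpk pP) => //.
  exact: rank_rfix_unitri Pg1 (chi_g1 i).
have := unitri_rsim_eq Pg1 (chi_g1 i) (chi_g1 j) sim_ij Pg2.
rewrite /chi chi12 chi22 !mulr1 !add0r => /eqP; rewrite nth_uniq ?size_s //.
exact/negP.
Qed.

Unset Implicit Arguments.

Theorem corollary5p4 (k : closedFieldType) (p : nat) (gT : finGroupType)
    (P : {group gT}) :
  p \in [pchar k] -> (p.-group P)%g ->
  (forall (n : nat) (rM : mx_representation k P n),
      mx_indecomposable rM -> End_symmetric rM -> (n <= #|P|)%N) /\
  (~~ cyclic P ->
    forall N : nat, exists (d : 'I_N -> nat)
      (r : forall i : 'I_N, mx_representation k P (d i)),
      (forall i, mx_indecomposable (r i) /\ End_symmetric (r i)) /\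
      (forall i j, i != j -> ~ mx_rsim (r i) (r j))).
Proof.
move=> charpk pP; split.
  by move=> n rM; exact: indecomposable_End_symmetric_dim_le_card charpk pP.
exact: noncyclic_pgroup_many_symmetric_indecomposables charpk pP.
Qed.
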